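(* Let $R$ be a ring, $I$ a non-empty countable set, $D=\{\delta_i\mid i\in I\}$ a family of derivations of $R$, $X=\{x_i\mid i\in I\}$ a set of distinct non-commuting indeterminates, and $S=R[X;D]$. For $J\subseteq I$ put $X_J=\{x_i\mid i\in J\}$, $D_J=\{\delta_i\mid i\in J\}$ and $S_J=R[X_J;D_J]$. Then for every $J\subseteq I$, $S_J$ is both a right corner and a left corner of $S$. In particular, if $S$ is left (respectively right) quasi-duo, then $S_J$ is left (respectively right) quasi-duo for every subset $J\subseteq I$.
   Context: All rings are unital and associative. A derivation of $R$ is an additive map $\delta:R\to R$ with $\delta(rs)=r\delta(s)+\delta(r)s$. The differential polynomial ring in several indeterminates $R[X;D]$ is the set of all (noncommutative) polynomials in the indeterminates $x_i\in X$ (i.e. finite $R$-linear combinations $a_1t_1+\cdots+a_nt_n$ of monomials $t_k$, finite words in the alphabet $X$, coefficients written on the left), with natural addition and multiplication generated by the commutation rules $x_ia=ax_i+\delta_i(a)$ for $a\in R$, $i\in I$ (the $\delta_i$ need not be distinct). A subring $B$ of a ring $A$ (unital, possibly with $1_B\neq 1_A$) is a left corner of $A$ if there is an additive subgroup $C$ of $A$ with $A=B\oplus C$ and $BC\subseteq C$; it is a right corner if instead $CB\subseteq C$. A ring is left (right) quasi-duo if every maximal left (right) ideal is two-sided. *)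

From HB Require Import structures.
From mathcomp Require Import all_boot all_order all_algebra.
Set Implicit Arguments. Unset Strict Implicit. Unset Printing Implicit Defensive.
Import GRing.Theory.
Local Open Scope ring_scope.

Definition is_derivation (R : pzRingType) (d : R -> R) : Prop :=
  (forall r s, d (r + s) = d r + d s) /\
  (forall r s, d (r * s) = r * d s + d r * s).

Definition monom (S : pzRingType) (I : Type) (x : I -> S) (w : seq I) : S :=
  \prod_(i <- w) x i.

Definition lincomb (R S : pzRingType) (I : Type) (phi : R -> S) (x : I -> S)
  (l : seq (R * seq I)) : S :=
  \sum_(p <- l) phi p.1 * monom x p.2.

(* S is (an isomorphic copy of) the differential polynomial ring R[X;D]:
   via phi : R -> S and the indeterminates x_i, S is the free left R-module
   on the set of all words in the alphabet X = {x_i | i in I}, and the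
   multiplication obeys x_i a = a x_i + delta_i(a). *)
Definition is_diff_poly_ring (R S : pzRingType) (I : eqType)
  (delta : I -> R -> R) (phi : {rmorphism R -> S}) (x : I -> S) : Prop :=
  [/\
      forall s : S, exists l : seq (R * seq I), s = lincomb phi x l,
      forall l : seq (R * seq I), uniq (map snd l) ->
        lincomb phi x l = 0 -> forall p, p \in l -> p.1 = 0
    &
      forall (i : I) (a : R), x i * phi a = phi a * x i + phi (delta i a)].

(* S_J = R[X_J;D_J], viewed inside S: the R-combinations of words whose
   letters all lie in J. *)
Definition subpoly (R S : pzRingType) (I : eqType) (phi : R -> S) (x : I -> S)
  (J : I -> Prop) : S -> Prop :=
  fun s => exists l : seq (R * seq I),
    (forall p, p \in l -> forall i, i \in p.2 -> J i) /\ s = lincomb phi x l.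

Definition add_subgroup (A : pzRingType) (C : A -> Prop) : Prop :=
  [/\ C 0, forall a b, C a -> C b -> C (a + b) & forall a, C a -> C (- a)].

Definition subring (A : pzRingType) (B : A -> Prop) : Prop :=
  [/\ add_subgroup B, exists e, B e /\ forall b, B b -> e * b = b /\ b * e = b
    & forall a b, B a -> B b -> B (a * b)].

Definition direct_sum (A : pzRingType) (B C : A -> Prop) : Prop :=
  (forall a, exists b c, [/\ B b, C c & a = b + c]) /\
  (forall a, B a -> C a -> a = 0).

Definition left_corner (A : pzRingType) (B : A -> Prop) : Prop :=
  subring B /\ exists C : A -> Prop,
    [/\ add_subgroup C, direct_sum B C & forall b c, B b -> C c -> C (b * c)].

Definition right_corner (A : pzRingType) (B : A -> Prop) : Prop :=
  subring B /\ exists C : A -> Prop,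
    [/\ add_subgroup C, direct_sum B C & forall b c, B b -> C c -> C (c * b)].

(* Ideals of the ring B (a subring of A, or A itself with B = fun _ => True). *)
Definition left_ideal_in (A : pzRingType) (B L : A -> Prop) : Prop :=
  [/\ forall a, L a -> B a, add_subgroup L & forall b l, B b -> L l -> L (b * l)].

Definition right_ideal_in (A : pzRingType) (B L : A -> Prop) : Prop :=
  [/\ forall a, L a -> B a, add_subgroup L & forall b l, B b -> L l -> L (l * b)].

Definition proper_in (A : pzRingType) (B L : A -> Prop) : Prop :=
  exists b, B b /\ ~ L b.

Definition max_left_ideal_in (A : pzRingType) (B L : A -> Prop) : Prop :=
  [/\ left_ideal_in B L, proper_in B L &
      forall M, left_ideal_in B M -> proper_in B M ->
        (forall a, L a -> M a) -> forall a, M a -> L a].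

Definition max_right_ideal_in (A : pzRingType) (B L : A -> Prop) : Prop :=
  [/\ right_ideal_in B L, proper_in B L &
      forall M, right_ideal_in B M -> proper_in B M ->
        (forall a, L a -> M a) -> forall a, M a -> L a].

Definition left_quasi_duo_in (A : pzRingType) (B : A -> Prop) : Prop :=
  forall L, max_left_ideal_in B L -> right_ideal_in B L.

Definition right_quasi_duo_in (A : pzRingType) (B : A -> Prop) : Prop :=
  forall L, max_right_ideal_in B L -> left_ideal_in B L.

(* Let C be the span of the words with a letter outside J. Moving a
   coefficient across a word w with x_i a = a x_i + delta_i(a) only produces
   subwords of w; hence S_J C stays in the left span of such words, and C' S_J
   stays in their right span C' (coefficients written on the right). The sums
   S = S_J + C and S = S_J + C' are direct: for C this is the freeness of the
   words, for C' one compares the coefficients of the longest words, which do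
   not change when a right combination is rewritten as a left one.
   For the quasi-duo part, if B is a right corner of A with 1 in B and L is a
   maximal left ideal of B, then {s | A s is contained in L + C} is a proper
   left ideal of A; by Zorn it lies in a maximal left ideal N, which is
   two-sided when A is left quasi-duo, and maximality of L gives L = N cap B.
   The right-handed case is the same argument in the converse ring. *)

From HB Require Import structures.
From mathcomp Require Import all_boot all_order all_algebra.
From mathcomp Require classical_sets.
From Stdlib Require Import Classical.
Import GRing.Theory.
Local Open Scope ring_scope.
Set Implicit Arguments. Unset Strict Implicit. Unset Printing Implicit Defensive.

Definition addset (A : pzRingType) (B C : A -> Prop) (a : A) : Prop :=
  exists b c, [/\ B b, C c & a = b + c].

Section AddSubgroups.
Variable A : pzRingType.
Implicit Types D E : A -> Prop.

Lemma add_subgroup_sum D (T : eqType) (r : seq T) (F : T -> A) :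
  add_subgroup D -> (forall t, t \in r -> D (F t)) -> D (\sum_(t <- r) F t).
Proof. by move=> [D0 DD _] DF; rewrite big_seq; apply: big_ind. Qed.

Lemma add_subgroup_addset D E :
  add_subgroup D -> add_subgroup E -> add_subgroup (addset D E).
Proof.
move=> [D0 DD DN] [E0 ED EN]; split.
- by exists 0, 0; rewrite addr0.
- move=> _ _ [b [c [Db Ec ->]]] [b' [c' [Db' Ec' ->]]].
  by exists (b + b'), (c + c'); rewrite addrACA; split; auto.
- move=> _ [b [c [Db Ec ->]]].
  by exists (- b), (- c); rewrite opprD; split; auto.
Qed.

Lemma add_subgroup_mulr_preim D t :
  add_subgroup D -> add_subgroup (fun s => D (s * t)).
Proof.
move=> [D0 DD DN]; split=> [|a b Da Db|a Da]; first by rewrite mul0r.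
  by rewrite mulrDl; apply: DD.
by rewrite mulNr; apply: DN.
Qed.

Lemma add_subgroup_mull_preim D s :
  add_subgroup D -> add_subgroup (fun t => D (s * t)).
Proof.
move=> [D0 DD DN]; split=> [|a b Da Db|a Da]; first by rewrite mulr0.
  by rewrite mulrDr; apply: DD.
by rewrite mulrN; apply: DN.
Qed.

End AddSubgroups.

Definition rlincomb (R S : pzRingType) (I : Type) (phi : R -> S) (x : I -> S)
  (l : seq (R * seq I)) : S :=
  \sum_(p <- l) monom x p.2 * phi p.1.

Definition coef (R : pzRingType) (I : eqType) (l : seq (R * seq I)) (w : seq I) : R :=
  \sum_(p <- l | p.2 == w) p.1.

Section Coefficients.
Variables (R : pzRingType) (I : eqType).
Implicit Types (l : seq (R * seq I)) (w : seq I).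

Lemma coef_cat l1 l2 w : coef (l1 ++ l2) w = coef l1 w + coef l2 w.
Proof. by rewrite /coef big_cat. Qed.

Lemma coef_opp l w : coef [seq (- p.1, p.2) | p <- l] w = - coef l w.
Proof. by rewrite /coef big_map sumrN. Qed.

Lemma coef_eq0 l w : (forall p, p \in l -> p.2 <> w) -> coef l w = 0.
Proof. by move=> lw; rewrite /coef big1_seq // => p /andP[/eqP pw /lw]. Qed.

Lemma coef_filter (f : pred (seq I)) l w :
  coef [seq p <- l | f p.2] w = if f w then coef l w else 0.
Proof.
rewrite /coef big_filter_cond; case: ifP => fw.
  by apply: eq_bigl => p; case: eqP => [->|]; rewrite ?fw ?andbF.
by rewrite big1 // => p /andP[+ /eqP pw]; rewrite pw fw.
Qed.

End Coefficients.

Lemma sum_pred1_uniq (T : eqType) (V : nmodType) (r : seq T) (a : T) (F : T -> V) :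
  uniq r -> a \in r -> \sum_(w <- r | a == w) F w = F a.
Proof.
move=> ur ar; rewrite (big_rem a) // eqxx /= big1_seq ?addr0 // => w /andP[/eqP <-].
by rewrite mem_rem_uniqF.
Qed.

Lemma sum_partition_undup (T U : eqType) (V : nmodType) (l : seq T) (g : T -> U)
    (F : T -> V) :
  \sum_(p <- l) F p = \sum_(w <- undup (map g l)) \sum_(p <- l | g p == w) F p.
Proof.
under [RHS]eq_bigr do rewrite big_mkcond.
rewrite exchange_big /= !big_seq; apply: eq_bigr => p pl.
rewrite -big_mkcond /= (@sum_pred1_uniq _ _ _ (g p) (fun _ => F p)) ?undup_uniq //.
by rewrite mem_undup; apply: map_f.
Qed.

Section Combinations.
Variables (R S : pzRingType) (I : eqType) (phi : {rmorphism R -> S}) (x : I -> S).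
Implicit Types (l : seq (R * seq I)) (w : seq I).

Lemma monom_nil : monom x [::] = 1.
Proof. by rewrite /monom big_nil. Qed.

Lemma monom_cons i w : monom x (i :: w) = x i * monom x w.
Proof. by rewrite /monom big_cons. Qed.

Lemma monom_cat w v : monom x (w ++ v) = monom x w * monom x v.
Proof. by rewrite /monom big_cat. Qed.

Lemma lincomb_cons p l : lincomb phi x (p :: l) = phi p.1 * monom x p.2 + lincomb phi x l.
Proof. by rewrite /lincomb big_cons. Qed.

Lemma lincomb_cat l1 l2 : lincomb phi x (l1 ++ l2) = lincomb phi x l1 + lincomb phi x l2.
Proof. by rewrite /lincomb big_cat. Qed.

Lemma lincomb_opp l : lincomb phi x [seq (- p.1, p.2) | p <- l] = - lincomb phi x l.
Proof.
by rewrite /lincomb big_map -sumrN; apply: eq_bigr => p _; rewrite /= rmorphN mulNr.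
Qed.

Lemma rlincomb_cons p l :
  rlincomb phi x (p :: l) = monom x p.2 * phi p.1 + rlincomb phi x l.
Proof. by rewrite /rlincomb big_cons. Qed.

Lemma rlincomb_filter (f : pred (seq I)) l :
  rlincomb phi x l =
    rlincomb phi x [seq p <- l | f p.2] + rlincomb phi x [seq p <- l | ~~ f p.2].
Proof. by rewrite /rlincomb !big_filter (bigID (fun p => f p.2)). Qed.

Lemma lincomb_coef l :
  lincomb phi x l = \sum_(w <- undup (map snd l)) phi (coef l w) * monom x w.
Proof.
rewrite /lincomb (sum_partition_undup _ snd); apply: eq_bigr => w _.
by rewrite /coef rmorph_sum mulr_suml; apply: eq_bigr => p /eqP ->.
Qed.

Lemma rlincomb_coef l :
  rlincomb phi x l = \sum_(w <- undup (map snd l)) monom x w * phi (coef l w).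
Proof.
rewrite /rlincomb (sum_partition_undup _ snd); apply: eq_bigr => w _.
by rewrite /coef rmorph_sum mulr_sumr; apply: eq_bigr => p /eqP ->.
Qed.

Lemma lincomb_coef0 l : (forall w, coef l w = 0) -> lincomb phi x l = 0.
Proof. by move=> l0; rewrite lincomb_coef big1 // => w _; rewrite l0 rmorph0 mul0r. Qed.

Lemma rlincomb_coef0 l : (forall w, coef l w = 0) -> rlincomb phi x l = 0.
Proof. by move=> l0; rewrite rlincomb_coef big1 // => w _; rewrite l0 rmorph0 mulr0. Qed.

End Combinations.

Section Spans.
Variables (R S : pzRingType) (I : eqType) (delta : I -> R -> R).
Variables (phi : {rmorphism R -> S}) (x : I -> S).
Implicit Types (P Q T : seq I -> Prop) (l : seq (R * seq I)) (w v : seq I) (s t : S).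

Definition lspan P s :=
  exists l, (forall p, p \in l -> P p.2) /\ s = lincomb phi x l.

Definition rspan P s :=
  exists l, (forall p, p \in l -> P p.2) /\ s = rlincomb phi x l.

Lemma lspan_add_subgroup P : add_subgroup (lspan P).
Proof.
split.
- by exists [::]; rewrite /lincomb big_nil.
- move=> _ _ [l1 [P1 ->]] [l2 [P2 ->]]; exists (l1 ++ l2); rewrite lincomb_cat.
  by split=> // p; rewrite mem_cat => /orP[/P1|/P2].
- move=> _ [l [Pl ->]]; exists [seq (- p.1, p.2) | p <- l]; rewrite lincomb_opp.
  by split=> // _ /mapP[p pl ->]; exact: Pl pl.
Qed.

Lemma rspan_add_subgroup P : add_subgroup (rspan P).
Proof.
split.
- by exists [::]; rewrite /rlincomb big_nil.
- move=> _ _ [l1 [P1 ->]] [l2 [P2 ->]]; exists (l1 ++ l2); rewrite /rlincomb big_cat.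
  by split=> // p; rewrite mem_cat => /orP[/P1|/P2].
- move=> _ [l [Pl ->]]; exists [seq (- p.1, p.2) | p <- l].
  split; first by move=> _ /mapP[p pl ->]; exact: Pl pl.
  by rewrite /rlincomb big_map -sumrN; apply: eq_bigr => p _; rewrite rmorphN mulrN.
Qed.

Lemma lspan_monom P a w : P w -> lspan P (phi a * monom x w).
Proof.
move=> Pw; exists [:: (a, w)]; split; first by move=> p; rewrite inE => /eqP ->.
by rewrite /lincomb big_seq1.
Qed.

Lemma rspan_monom P a w : P w -> rspan P (monom x w * phi a).
Proof.
move=> Pw; exists [:: (a, w)]; split; first by move=> p; rewrite inE => /eqP ->.
by rewrite /rlincomb big_seq1.
Qed.

Lemma lspan_ind P (D : S -> Prop) : add_subgroup D ->
  (forall a w, P w -> D (phi a * monom x w)) -> forall s, lspan P s -> D s.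
Proof.
move=> addD gen _ [l [Pl ->]]; apply: add_subgroup_sum => // p pl; exact/gen/Pl.
Qed.

Lemma rspan_ind P (D : S -> Prop) : add_subgroup D ->
  (forall a w, P w -> D (monom x w * phi a)) -> forall s, rspan P s -> D s.
Proof.
move=> addD gen _ [l [Pl ->]]; apply: add_subgroup_sum => // p pl; exact/gen/Pl.
Qed.

Lemma lspan_sub P Q : (forall w, P w -> Q w) -> forall s, lspan P s -> lspan Q s.
Proof.
move=> PQ; apply: lspan_ind (lspan_add_subgroup Q) _ => a w /PQ; exact: lspan_monom.
Qed.

Lemma rspan_sub P Q : (forall w, P w -> Q w) -> forall s, rspan P s -> rspan Q s.
Proof.
move=> PQ; apply: rspan_ind (rspan_add_subgroup Q) _ => a w /PQ; exact: rspan_monom.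
Qed.

Hypothesis x_phi : forall i a, x i * phi a = phi a * x i + phi (delta i a).

Lemma x_mul_phi_monom i a w :
  x i * (phi a * monom x w) = phi a * monom x (i :: w) + phi (delta i a) * monom x w.
Proof. by rewrite mulrA x_phi mulrDl monom_cons !mulrA. Qed.

Lemma monom_phi_comm w a : exists2 r,
  lspan (fun v => subseq v w /\ (size v < size w)%N) r &
  monom x w * phi a = phi a * monom x w + r.
Proof.
elim: w a => [|i w IH] a.
  exists 0; first by have [] := lspan_add_subgroup (fun v => subseq v [::] /\ (size v < 0)%N).
  by rewrite monom_nil mul1r mulr1 addr0.
have [r wr e] := IH a.
set P := fun v => subseq v (i :: w) /\ (size v < size (i :: w))%N.
have [_ PD _] := lspan_add_subgroup P.
exists (phi (delta i a) * monom x w + x i * r); last first.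
  by rewrite [in LHS]monom_cons -mulrA e mulrDr x_mul_phi_monom addrA.
apply: (PD); first by apply: lspan_monom; split; [exact: subseq_cons | exact: ltnSn].
clear e; move: r wr; apply: lspan_ind (add_subgroup_mull_preim _ (lspan_add_subgroup P)) _.
move=> b v [vw ltvw]; rewrite x_mul_phi_monom; apply: PD; apply: lspan_monom; split.
- by rewrite /= eqxx.
- by rewrite /= ltnS.
- exact: subseq_trans vw (subseq_cons w i).
- exact: leqW.
Qed.

Lemma phi_monom_rspan a w : rspan (fun v => subseq v w) (phi a * monom x w).
Proof.
elim: w a => [|i w IH] a.
  by rewrite monom_nil mulr1 -[phi a]mul1r -(monom_nil x); apply: rspan_monom.
set P := fun v => subseq v (i :: w).
have [_ PD PN] := rspan_add_subgroup P.
have -> : phi a * monom x (i :: w) =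
    x i * (phi a * monom x w) - phi (delta i a) * monom x w.
  by rewrite x_mul_phi_monom addrK.
apply: PD; last first.
  apply: PN; apply: rspan_sub (IH _) => v vw; exact: subseq_trans vw (subseq_cons w i).
move: (phi a * monom x w) (IH a).
apply: rspan_ind (add_subgroup_mull_preim _ (rspan_add_subgroup P)) _.
by move=> b v vw; rewrite mulrA -monom_cons; apply: rspan_monom; rewrite /P /= eqxx.
Qed.

Lemma lspan_mul P Q T s t :
  (forall w v w', P w -> Q v -> subseq w' w -> T (w' ++ v)) ->
  lspan P s -> lspan Q t -> lspan T (s * t).
Proof.
move=> PQT Ps Qt; have addT := lspan_add_subgroup T; have [_ TD _] := addT.
move: s Ps; apply: lspan_ind (add_subgroup_mulr_preim _ addT) _ => a w Pw.
move: t Qt; apply: lspan_ind (add_subgroup_mull_preim _ addT) _ => b v Qv.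
have [r wr e] := monom_phi_comm w b.
rewrite mulrA -(mulrA _ (monom x w)) e mulrDr mulrDl.
rewrite mulrA -rmorphM -(mulrA _ (monom x w)) -monom_cat.
apply: TD; first by apply: lspan_monom; apply: PQT Pw Qv (subseq_refl w).
move: r wr {e}; apply: (lspan_ind (D := fun r => lspan T (phi a * r * monom x v))).
  exact: add_subgroup_mull_preim (add_subgroup_mulr_preim _ addT).
move=> c u [uw _]; rewrite mulrA -rmorphM -mulrA -monom_cat.
by apply: lspan_monom; apply: PQT Pw Qv uw.
Qed.

Lemma rspan_lspan_mul P Q T s t :
  (forall w v v', P w -> Q v -> subseq v' v -> T (w ++ v')) ->
  rspan P s -> lspan Q t -> rspan T (s * t).
Proof.
move=> PQT Ps Qt; have addT := rspan_add_subgroup T.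
move: s Ps; apply: rspan_ind (add_subgroup_mulr_preim _ addT) _ => a w Pw.
move: t Qt; apply: lspan_ind (add_subgroup_mull_preim _ addT) _ => b v Qv.
rewrite -mulrA (mulrA (phi a)) -rmorphM.
move: (phi (a * b) * monom x v) (phi_monom_rspan (a * b) v).
apply: rspan_ind (add_subgroup_mull_preim _ addT) _ => c u uv.
by rewrite mulrA -monom_cat; apply: rspan_monom; apply: PQT Pw Qv uv.
Qed.

Lemma rlincomb_lincomb n l : (forall p, p \in l -> size p.2 <= n)%N ->
  exists2 t, lspan (fun v => size v < n)%N t & rlincomb phi x l = lincomb phi x l + t.
Proof.
have [D0 D _] := lspan_add_subgroup (fun v => size v < n)%N.
elim: l => [|p l IH] ln.
  by exists 0 => //; rewrite /rlincomb /lincomb !big_nil addr0.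
have [|t lt e] := IH; first by move=> q ql; apply: ln; rewrite inE ql orbT.
have [r pr er] := monom_phi_comm p.2 p.1.
exists (r + t); first apply: D lt.
  apply: lspan_sub pr => v [_ lt_vp]; exact: leq_trans lt_vp (ln p (mem_head _ _)).
by rewrite rlincomb_cons lincomb_cons e er addrACA.
Qed.

Hypothesis words_free : forall l, uniq (map snd l) ->
  lincomb phi x l = 0 -> forall p, p \in l -> p.1 = 0.

Lemma lincomb_eq0_coef l : lincomb phi x l = 0 -> forall w, coef l w = 0.
Proof.
move=> l0 w; pose l' := [seq (coef l v, v) | v <- undup (map snd l)].
have l'E : map snd l' = undup (map snd l) by rewrite -map_comp; apply: map_id_in.
have l'0 : lincomb phi x l' = 0 by rewrite -{}l0 [RHS]lincomb_coef /lincomb big_map.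
have [wl|wNl] := boolP (w \in map snd l).
  apply: (words_free _ l'0 (p := (coef l w, w))); first by rewrite l'E undup_uniq.
  by apply: (map_f (fun v => (coef l v, v))); rewrite mem_undup.
by apply: coef_eq0 => p pl pw; move/negP: wNl; apply; rewrite -pw; apply: map_f.
Qed.

Lemma lincomb_eq_coef l1 l2 :
  lincomb phi x l1 = lincomb phi x l2 -> forall w, coef l1 w = coef l2 w.
Proof.
move=> e w; apply/eqP; rewrite -subr_eq0 -coef_opp -coef_cat; apply/eqP.
by apply: lincomb_eq0_coef; rewrite lincomb_cat lincomb_opp e subrr.
Qed.

Lemma lspan_disjoint P Q s :
  (forall w, P w -> ~ Q w) -> lspan P s -> lspan Q s -> s = 0.
Proof.
move=> PQ [g [Pg ->]] [c [Qc e]]; apply: lincomb_coef0 => w.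
have [Pw|Pw] := classic (P w); last first.
  by apply: coef_eq0 => p pg pw; apply: Pw; rewrite -pw; apply: Pg.
rewrite (lincomb_eq_coef e) coef_eq0 // => p pc pw.
by apply: PQ Pw _; rewrite -pw; apply: Qc.
Qed.

(* Induction on a strict bound for the word lengths of the right combination:
   turning it into a left combination changes only shorter words, so its
   coefficients at maximal length are read off a left expansion of [s]. *)
Lemma rspan_lspan_disjoint P Q s :
  (forall w, P w -> ~ Q w) -> lspan P s -> rspan Q s -> s = 0.
Proof.
move=> PQ [g [Pg ->]] [l [Ql e]].
suff: forall n l, (forall p, p \in l -> Q p.2 /\ size p.2 < n)%N ->
    lincomb phi x g = rlincomb phi x l -> lincomb phi x g = 0.
  move=> bound; apply: (bound (\max_(q <- l) size q.2).+1 l _ e) => p pl.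
  split; first exact: Ql.
  by rewrite ltnS; apply: leq_bigmax_seq.
elim=> [|n IH] {e Ql}l Ql e.
  case: l Ql e => [_ ->|p l Ql]; first by rewrite /rlincomb big_nil.
  by case: (Ql p (mem_head _ _)).
have [|_ [m [mn ->]] em] := @rlincomb_lincomb n l; first by move=> p /Ql[].
have elm : lincomb phi x g = lincomb phi x (l ++ m) by rewrite lincomb_cat -em.
have top w : size w = n -> coef l w = 0.
  move=> wn; have := lincomb_eq_coef elm w.
  rewrite coef_cat (@coef_eq0 _ _ m) ?addr0; last first.
    by move=> p pm pw; have := mn p pm; rewrite /= pw wn ltnn.
  have [Qw|Qw] := classic (Q w).
    by rewrite coef_eq0 // => p pg pw; apply: PQ (Pg p pg) _; rewrite pw.
  by move=> _; apply: coef_eq0 => p pl pw; apply: Qw; rewrite -pw; case: (Ql p pl).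
have top0 : rlincomb phi x [seq p <- l | size p.2 == n] = 0.
  apply: rlincomb_coef0 => w; rewrite (coef_filter (fun w => size w == n)).
  by case: eqP => // /top.
apply: (IH [seq p <- l | size p.2 != n]).
  move=> p; rewrite mem_filter => /andP[pn /Ql[Qp]].
  by rewrite ltnS leq_eqVlt (negPf pn).
by rewrite e (rlincomb_filter phi x (fun w => size w == n)) top0 add0r.
Qed.

Hypothesis words_span : forall s, exists l, s = lincomb phi x l.

Lemma lspan_words s : lspan (fun _ => True) s.
Proof. by have [l ->] := words_span s; exists l. Qed.

Lemma addset_lspan_compl P s : addset (lspan P) (lspan (fun w => ~ P w)) s.
Proof.
have addB := lspan_add_subgroup P; have addC := lspan_add_subgroup (fun w => ~ P w).
have addPC := add_subgroup_addset addB addC.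
have [[B0 _ _] [C0 _ _]] := (addB, addC).
apply: lspan_ind addPC _ s (lspan_words s) => a w _.
have [Pw|Pw] := classic (P w).
  by exists (phi a * monom x w), 0; rewrite addr0; split=> //; apply: lspan_monom.
by exists 0, (phi a * monom x w); rewrite add0r; split=> //; apply: lspan_monom.
Qed.

Lemma addset_lspan_rspan_compl P s : (forall w v, P w -> subseq v w -> P v) ->
  addset (lspan P) (rspan (fun w => ~ P w)) s.
Proof.
move=> Psub.
have addB := lspan_add_subgroup P; have addC := rspan_add_subgroup (fun w => ~ P w).
have addPC := add_subgroup_addset addB addC.
have [[B0 BD _] [C0 _ _]] := (addB, addC).
apply: lspan_ind (addPC) _ s (lspan_words s) => a w _.
have wT : rspan (fun _ => True) (phi a * monom x w).
  by apply: rspan_sub (phi_monom_rspan a w).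
apply: rspan_ind addPC _ _ wT => b v _.
have [Pv|Pv] := classic (P v); last first.
  by exists 0, (monom x v * phi b); rewrite add0r; split=> //; apply: rspan_monom.
exists (monom x v * phi b), 0; rewrite addr0; split=> //.
have [r vr ->] := monom_phi_comm v b.
apply: BD; first exact: lspan_monom.
by apply: lspan_sub vr => u [uv _]; apply: Psub uv.
Qed.

Definition word_over (J : I -> Prop) w := forall i, i \in w -> J i.

Lemma subpolyE J : subpoly phi x J = lspan (word_over J).
Proof. by []. Qed.

Lemma word_over_subseq J w v : word_over J w -> subseq v w -> word_over J v.
Proof. by move=> Jw vw i iv; apply/Jw/(mem_subseq vw). Qed.

Lemma word_over_cat J w v : word_over J w -> word_over J v -> word_over J (w ++ v).
Proof. by move=> Jw Jv i; rewrite mem_cat => /orP[/Jw|/Jv]. Qed.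

Lemma word_over_catl J w v : word_over J (w ++ v) -> word_over J w.
Proof. by move=> Jwv i iw; apply: Jwv; rewrite mem_cat iw. Qed.

Lemma word_over_catr J w v : word_over J (w ++ v) -> word_over J v.
Proof. by move=> Jwv i iv; apply: Jwv; rewrite mem_cat iv orbT. Qed.

Lemma subpoly1 J : subpoly phi x J 1.
Proof.
have -> : 1 = phi 1 * monom x [::] by rewrite monom_nil rmorph1 mulr1.
by rewrite subpolyE; apply: lspan_monom.
Qed.

Lemma subpoly_subring J : subring (subpoly phi x J).
Proof.
have J1 := subpoly1 J; rewrite subpolyE in J1 *.
split; first exact: lspan_add_subgroup.
  by exists 1; split=> // b _; rewrite mul1r mulr1.
move=> a b; apply: lspan_mul => w v w' Jw Jv w'w.
exact: word_over_cat (word_over_subseq Jw w'w) Jv.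
Qed.

Lemma left_corner_subpoly J : left_corner (subpoly phi x J).
Proof.
split; first exact: subpoly_subring.
exists (lspan (fun w => ~ word_over J w)); rewrite subpolyE; split.
- exact: lspan_add_subgroup.
- split=> [a|a]; first exact: addset_lspan_compl.
  by apply: lspan_disjoint => w Jw; apply.
- move=> b c; apply: lspan_mul => w v w' _ Jv _ Jw'v.
  by apply: Jv; apply: word_over_catr Jw'v.
Qed.

Lemma right_corner_subpoly J : right_corner (subpoly phi x J).
Proof.
split; first exact: subpoly_subring.
exists (rspan (fun w => ~ word_over J w)); rewrite subpolyE; split.
- exact: rspan_add_subgroup.
- split=> [a|a]; first exact: addset_lspan_rspan_compl (@word_over_subseq J).
  by apply: rspan_lspan_disjoint => w Jw; apply.
- move=> b c Bb Cc; apply: rspan_lspan_mul Cc Bb => w v v' Jw _ _ Jwv'.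
  by apply: Jw; apply: word_over_catl Jwv'.
Qed.

End Spans.

Definition proper_left_ideal (A : pzRingType) (N : A -> Prop) : Prop :=
  [/\ add_subgroup N, forall a s, N s -> N (a * s) & ~ N 1].

Lemma maximal_left_ideal_exists (A : pzRingType) (M : A -> Prop) :
  proper_left_ideal M -> exists N : A -> Prop, [/\ proper_left_ideal N,
    (forall a, M a -> N a) &
    forall N', proper_left_ideal N' -> (forall a, N a -> N' a) -> forall a, N' a -> N a].
Proof.
(* Zorn's lemma is applied to the [Y] for which [M `|` Y] is a proper left
   ideal, so that the empty chain is admissible. *)
move=> PM; pose P Y := proper_left_ideal (classical_sets.setU M Y).
have [|Y [PY maxY]] := @classical_sets.Zorn_bigcup A P; last first.
  exists (classical_sets.setU M Y); split=> // [a|N' PN' YN' a N'a]; first by left.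
  apply: NNPP => Ya; apply: (maxY N'); last first.
    by rewrite /P classical_sets.setUidr // => b Mb; apply: YN'; left.
  by split=> [b Yb|N'Y]; [apply: YN'; right | apply: Ya; right; apply: N'Y].
move=> F FP Ftot; set U := classical_sets.bigcup F id.
have common a b : M a \/ U a -> M b \/ U b -> exists Y, [/\ P Y,
    (forall c, Y c -> U c), M a \/ Y a & M b \/ Y b].
  have P0 : P classical_sets.set0 by rewrite /P classical_sets.setU0.
  case=> [Ma|[Ya FYa ya]] [Mb|[Yb FYb yb]].
  - by exists classical_sets.set0; split=> //; left.
  - by exists Yb; split; [exact: FP | move=> c ?; exists Yb | left | right].
  - by exists Ya; split; [exact: FP | move=> c ?; exists Ya | right | left].
  have [sub|sub] := Ftot Ya Yb FYa FYb.
    by exists Yb; split; [exact: FP | move=> c ?; exists Yb | right; apply: sub | right].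
  by exists Ya; split; [exact: FP | move=> c ?; exists Ya | right | right; apply: sub].
have grow Y c : (forall c, Y c -> U c) -> M c \/ Y c -> M c \/ U c.
  by move=> YU [Mc|Yc]; [left|right; apply: YU].
split; first split.
- by left; have [[]] := PM.
- move=> a b Ua Ub; have [Y [[[_ YD _] _ _] YU Ya Yb]] := common a b Ua Ub.
  exact: grow (YD _ _ Ya Yb).
- move=> a Ua; have [Y [[[_ _ YN] _ _] YU Ya _]] := common a a Ua Ua.
  exact: grow (YN _ Ya).
- move=> a s Us; have [Y [[_ Ym _] YU Ys _]] := common s s Us Us.
  exact: grow (Ym a _ Ys).
- move=> U1; have [Y [[_ _ Y1] _ Y1' _]] := common 1 1 U1 U1.
  exact: Y1 Y1'.
Qed.

Lemma max_left_idealT (A : pzRingType) (N : A -> Prop) :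
  proper_left_ideal N ->
  (forall N', proper_left_ideal N' -> (forall a, N a -> N' a) -> forall a, N' a -> N a) ->
  max_left_ideal_in (fun _ => True) N.
Proof.
move=> [addN Nm N1] maxN; split; [by split=> // a s _; apply: Nm | by exists 1 |].
move=> N' [_ addN' N'm] [b [_ N'b]] NN'; apply: maxN NN'.
split=> // [a s|N'1]; first exact: N'm.
by apply: N'b; rewrite -(mulr1 b); apply: N'm.
Qed.

Section CornerExtension.
Variables (A : pzRingType) (B C L : A -> Prop).
Hypotheses (addB : add_subgroup B) (addC : add_subgroup C) (B1 : B 1).
Hypotheses (sumBC : direct_sum B C) (CB : forall b c, B b -> C c -> C (c * b)).
Hypotheses (idealL : left_ideal_in B L) (properL : proper_in B L).

Definition corner_extension s := forall a, exists l c, [/\ L l, C c & a * s = l + c].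

Lemma sub_corner_extension l : L l -> corner_extension l.
Proof.
have [[dec _] [LB _ Lm]] := (sumBC, idealL).
move=> Ll a; have [b [c [Bb Cc ->]]] := dec a.
by exists (b * l), (c * l); split; [exact: Lm | exact: CB (LB _ Ll) Cc | rewrite mulrDl].
Qed.

Lemma proper_corner_extension : proper_left_ideal corner_extension.
Proof.
have [[[_ BD BN] [C0 CD CN]] [_ BC0]] := (addB, addC, sumBC).
have [[LB [L0 LD LN] Lm] [b0 [Bb0 Lb0]]] := (idealL, properL).
split; first split.
- by move=> a; exists 0, 0; rewrite mulr0 addr0.
- move=> s t Ms Mt a; have [l1 [c1 [L1 C1 e1]]] := Ms a.
  have [l2 [c2 [L2 C2 e2]]] := Mt a; exists (l1 + l2), (c1 + c2).
  by split; [exact: LD | exact: CD | rewrite mulrDr e1 e2 addrACA].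
- move=> s Ms a; have [l [c [Ll Cc e]]] := Ms a.
  by exists (- l), (- c); split; [exact: LN | exact: CN | rewrite mulrN e opprD].
- by move=> a s Ms b; have [l [c [Ll Cc e]]] := Ms (b * a); exists l, c; rewrite mulrA.
- move=> M1; have [l [c [Ll Cc]]] := M1 1; rewrite mulr1 => e1.
  (* [c = 1 - l] lies in both [B] and [C], hence vanishes and [1 \in L]. *)
  have Bc : B c.
    rewrite (_ : c = 1 - l); first exact: BD B1 (BN _ (LB _ Ll)).
    by rewrite e1 addrAC subrr add0r.
  apply: Lb0; rewrite -(mulr1 b0); apply: Lm => //.
  by rewrite e1 (BC0 c Bc Cc) addr0.
Qed.

End CornerExtension.

Lemma left_quasi_duo_right_corner (A : pzRingType) (B : A -> Prop) :
  right_corner B -> B 1 ->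
  left_quasi_duo_in (fun _ : A => True) -> left_quasi_duo_in B.
Proof.
move=> [[addB _ BM] [C [addC sumBC CB]]] B1 qdA L maxL.
have [idealL properL maxL'] := maxL; have [LB addL _] := idealL.
have [N [PN MN maxN]] := maximal_left_ideal_exists
  (proper_corner_extension addB addC B1 sumBC idealL properL).
have [_ _ Nr] := qdA N (max_left_idealT PN maxN).
have [[[N0 ND NN] Nm N1] [B0 BD BN]] := (PN, addB).
have LN l : L l -> N l by move=> Ll; apply/MN/(sub_corner_extension sumBC CB idealL).
split=> // b l Bb Ll; apply: (maxL' (fun s => N s /\ B s)).
- split; first by move=> a [].
  + split=> [|a c [Na Ba] [Nc Bc]|a [Na Ba]]; first by [].
      by split; [exact: ND | exact: BD].
    by split; [exact: NN | exact: BN].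
  + by move=> b' l' Bb' [Nl' Bl']; split; [apply: Nm | apply: BM].
- by exists 1; split=> // -[/N1].
- by move=> a La; split; [apply: LN | apply: LB].
- by split; [apply: Nr => //; apply: LN | apply: BM => //; apply: LB].
Qed.

Lemma subring_converse (A : pzRingType) (B : A -> Prop) :
  subring B -> subring (A := A^c) B.
Proof.
move=> [addB [e [Be He]] BM]; split=> //; last by move=> a b Ba Bb; apply: BM.
by exists e; split=> // b /He [].
Qed.

Lemma right_quasi_duo_left_corner (A : pzRingType) (B : A -> Prop) :
  left_corner B -> B 1 ->
  right_quasi_duo_in (fun _ : A => True) -> right_quasi_duo_in B.
Proof.
move=> [subB CB] B1; apply: (@left_quasi_duo_right_corner A^c) => //.
split; [exact: subring_converse | exact: CB].
Qed.

Theorem lemma5p1 (R S : pzRingType) (I : countType) (i0 : I)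
  (delta : I -> R -> R) (phi : {rmorphism R -> S}) (x : I -> S)
  (Hder : forall i, is_derivation (delta i))
  (HS : is_diff_poly_ring delta phi x) :
  forall J : I -> Prop,
    (right_corner (subpoly phi x J) /\ left_corner (subpoly phi x J)) /\
    (left_quasi_duo_in (fun _ : S => True) ->
       left_quasi_duo_in (subpoly phi x J)) /\
    (right_quasi_duo_in (fun _ : S => True) ->
       right_quasi_duo_in (subpoly phi x J)).
Proof.
move=> J; have [span free comm] := HS.
have right_corner := right_corner_subpoly comm free span J.
have left_corner := left_corner_subpoly comm free span J.
have J1 := subpoly1 phi x J.
split; first by split.
split; first exact: left_quasi_duo_right_corner right_corner J1.
exact: right_quasi_duo_left_corner left_corner J1.
Qed.
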